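(* Let $C\subseteq\mathbb{F}_q^n$ be a linear code and let $(A,B)$ be a $2$-power $t$-error locating pair for $C$. Let $\mathbf{y}=\mathbf{c}+\mathbf{e}$ with $\mathbf{c}\in C$, $\mathbf{e}\in\mathbb{F}_q^n$, $\mathrm{w}(\mathbf{e})=t$, and let $I_{\mathbf{e}}=\mathrm{supp}(\mathbf{e})$. Define $M_1=\{\mathbf{a}\in A\mid \langle \mathbf{a}*\mathbf{y},\mathbf{b}\rangle=0\ \forall \mathbf{b}\in B\}$, $M_2=\{\mathbf{a}\in A\mid \langle \mathbf{a}*\mathbf{y}^2,\mathbf{v}\rangle=0\ \forall \mathbf{v}\in (B^{\perp}*C)^{\perp}\}$ and $M=M_1\cap M_2$. Then $$A(I_{\mathbf{e}})\subseteq M\subseteq M_1\subseteq A.$$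
   Context: All codes are $\mathbb{F}_q$-linear subspaces of $\mathbb{F}_q^n$. For $\mathbf{u},\mathbf{v}\in\mathbb{F}_q^n$, $\mathbf{u}*\mathbf{v}=(u_1v_1,\dots,u_nv_n)$ and $\mathbf{u}^i=(u_1^i,\dots,u_n^i)$. For codes $A,B$, $A*B$ is the $\mathbb{F}_q$-span of $\{\mathbf{a}*\mathbf{b}:\mathbf{a}\in A,\mathbf{b}\in B\}$. $\langle\mathbf{u},\mathbf{v}\rangle=\sum_i u_iv_i$, and $X^\perp$ is the dual code with respect to it. $\mathrm{w}$ is the Hamming weight, $\mathrm{d}(X)$ the minimum distance, $\mathrm{supp}(\mathbf{x})=\{i: x_i\neq 0\}$. For $J\subseteq\{1,\dots,n\}$, $A(J)=\{\mathbf{a}\in A\mid a_j=0\ \forall j\in J\}\subseteq\mathbb{F}_q^n$ (zeros are kept, not deleted). A pair $(A,B)$ of codes in $\mathbb{F}_q^n$ is a $2$-power $t$-error locating pair for $C$ if: (1) $A*B\subseteq C^\perp$; (2) $\dim A>t$; (3) $\mathrm{d}(A^\perp)>t$; (4) $\mathrm{d}(A)+\mathrm{d}(C)>n$; (5) $\dim B+\dim (B^\perp*C)^\perp\ge t$. *)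

From HB Require Import structures.
From mathcomp Require Import all_boot all_order all_algebra all_field.
Set Implicit Arguments. Unset Strict Implicit. Unset Printing Implicit Defensive.
Import GRing.Theory.
Local Open Scope ring_scope.

Section Codes.
Variables (F : finFieldType) (n : nat).
Local Notation vec := 'rV[F]_n.

Definition starv (u v : vec) : vec := \row_i (u 0 i * v 0 i).
Definition powv (u : vec) (k : nat) : vec := \row_i (u 0 i ^+ k).
Definition dotv (u v : vec) : F := \sum_i u 0 i * v 0 i.
Definition supp (x : vec) : {set 'I_n} := [set i | x 0 i != 0].
Definition wt (x : vec) : nat := #|supp x|.
(* minimum distance; convention: d({0}) = n+1 (i.e. "infinity") *)
Definition mindist (X : {vspace vec}) : nat :=
  \big[minn/n.+1]_(x : vec | (x \in X) && (x != 0)) wt x.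
Definition dualc (X : {vspace vec}) : {vspace vec} :=
  <<[seq v <- enum [set: vec] | [forall x : vec, (x \in X) ==> (dotv x v == 0%R)]]>>%VS.
Definition starc (A B : {vspace vec}) : {vspace vec} :=
  <<[seq starv ab.1 ab.2 | ab <- enum [set: vec * vec] & (ab.1 \in A) && (ab.2 \in B)]>>%VS.
(* A(J) : codewords of A vanishing on J (zeros kept) *)
Definition shortc (A : {vspace vec}) (J : {set 'I_n}) : {set vec} :=
  [set a : vec | (a \in A) && [forall j in J, a 0 j == 0%R]].
Definition two_power_ELP (A B C : {vspace vec}) (t : nat) : Prop :=
  [/\ (starc A B <= dualc C)%VS,
      (\dim A > t)%N,
      (mindist (dualc A) > t)%N,
      (mindist A + mindist C > n)%N &
      (\dim B + \dim (dualc (starc (dualc B) C)) >= t)%N].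

Definition M1set (A B : {vspace vec}) (y : vec) : {set vec} :=
  [set a : vec | (a \in A) && [forall b : vec, (b \in B) ==> (dotv (starv a y) b == 0%R)]].
Definition M2set (A B C : {vspace vec}) (y : vec) : {set vec} :=
  [set a : vec | (a \in A) &&
     [forall v : vec, (v \in dualc (starc (dualc B) C)) ==> (dotv (starv a (powv y 2)) v == 0%R)]].
End Codes.

From HB Require Import structures.
From mathcomp Require Import all_boot all_order all_algebra all_field.
From mathcomp Require Import ring.
Import GRing.Theory.
Local Open Scope ring_scope.

(* If a vanishes on supp e then a * e = 0, so a * y = a * c and
   a * y^2 = (a * c) * c.  From A * B <= C^perp and the identity
   <a * c, b> = <c, a * b> we get a * c in B^perp, which gives both
   <a * y, b> = 0 for b in B and (a * c) * c in B^perp * C, hence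
   <a * y^2, v> = 0 for v in (B^perp * C)^perp.  Only condition (1) of the
   locating pair is needed. *)

Set Implicit Arguments. Unset Strict Implicit.

Section SchurProduct.
Variables (F : finFieldType) (n : nat).
Local Notation vec := 'rV[F]_n.

Lemma starvC (u v : vec) : starv u v = starv v u.
Proof. by apply/rowP => i; rewrite !mxE mulrC. Qed.

Lemma dotvC (u v : vec) : dotv u v = dotv v u.
Proof. by apply: eq_bigr => i _; rewrite mulrC. Qed.

Lemma dotv_starv (u v w : vec) : dotv (starv u v) w = dotv u (starv v w).
Proof. by apply: eq_bigr => i _; rewrite !mxE mulrA. Qed.

Lemma dotv_span (x : vec) (s : seq vec) v :
  {in s, forall w, dotv x w = 0} -> v \in <<s>>%VS -> dotv x v = 0.
Proof.
move=> xs0 /(@coord_span _ _ _ (in_tuple s)) ->; rewrite /dotv.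
under eq_bigr => i _ do rewrite summxE mulr_sumr.
rewrite exchange_big /= big1 // => j _.
under eq_bigr => i _ do rewrite mxE mulrCA.
by rewrite -mulr_sumr [X in _ * X]xs0 ?mulr0 // mem_nth.
Qed.

Lemma dualcP (X : {vspace vec}) v :
  reflect (forall x, x \in X -> dotv x v = 0) (v \in dualc X).
Proof.
apply: (iffP idP) => [vX x xX | Xv0].
  move: vX; apply: dotv_span => w; rewrite mem_filter => /andP[/forallP Xw _].
  by apply/eqP; move/implyP: (Xw x); apply.
apply: memv_span; rewrite mem_filter mem_enum in_setT andbT.
by apply/forallP => x; apply/implyP => /Xv0 ->.
Qed.

Lemma mem_starc (A B : {vspace vec}) a b :
  a \in A -> b \in B -> starv a b \in starc A B.
Proof.
move=> aA bB; apply: memv_span.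
apply: (map_f (fun ab : vec * vec => starv ab.1 ab.2) (x := (a, b))).
by rewrite mem_filter /= aA bB mem_enum in_setT.
Qed.

Lemma starc_sub_dualc_starv (A B C : {vspace vec}) a c :
  (starc A B <= dualc C)%VS -> a \in A -> c \in C -> starv a c \in dualc B.
Proof.
move=> sABC aA cC; apply/dualcP => b bB.
rewrite dotvC starvC dotv_starv.
by move/dualcP: (subvP sABC _ (mem_starc aA bB)); apply.
Qed.

Lemma starv_shortc_supp (A : {vspace vec}) a e :
  a \in shortc A (supp e) -> starv a e = 0.
Proof.
rewrite inE => /andP[_ /forallP a0].
apply/rowP => i; rewrite !mxE; have [->|ei0] := eqVneq (e 0 i) 0; first by rewrite mulr0.
by move: (a0 i); rewrite inE ei0 => /eqP ->; rewrite mul0r.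
Qed.

Lemma starv_addr_annihilated (a c e : vec) :
  starv a e = 0 -> starv a (c + e) = starv a c.
Proof.
move/rowP=> ae0; apply/rowP => i; move: (ae0 i); rewrite !mxE => ae0i.
by rewrite mulrDr ae0i addr0.
Qed.

Lemma starv_powv2_annihilated (a c e : vec) :
  starv a e = 0 -> starv a (powv (c + e) 2) = starv (starv a c) c.
Proof.
move/rowP=> ae0; apply/rowP => i; move: (ae0 i); rewrite !mxE => ae0i.
have -> : a 0 i * (c 0 i + e 0 i) ^+ 2
    = a 0 i * c 0 i * c 0 i + a 0 i * e 0 i * (c 0 i *+ 2 + e 0 i) by ring.
by rewrite ae0i mul0r addr0.
Qed.

End SchurProduct.

Section ErrorLocation.
Variables (F : finFieldType) (n : nat) (A B C : {vspace 'rV[F]_n}) (c e : 'rV[F]_n).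
Hypotheses (sABC : (starc A B <= dualc C)%VS) (cC : c \in C).

Lemma shortc_sub_M1set : shortc A (supp e) \subset M1set A B (c + e).
Proof.
apply/subsetP => a aAe; have aA : a \in A by move: aAe; rewrite inE => /andP[].
move/dualcP: (starc_sub_dualc_starv sABC aA cC) => acB0.
rewrite inE aA; apply/forallP => b; apply/implyP => bB.
by rewrite starv_addr_annihilated ?(starv_shortc_supp aAe) // dotvC acB0.
Qed.

Lemma shortc_sub_M2set : shortc A (supp e) \subset M2set A B C (c + e).
Proof.
apply/subsetP => a aAe; have aA : a \in A by move: aAe; rewrite inE => /andP[].
have acBd := starc_sub_dualc_starv sABC aA cC.
rewrite inE aA; apply/forallP => v; apply/implyP => /dualcP vBCd.
by rewrite starv_powv2_annihilated ?(starv_shortc_supp aAe) // vBCd ?mem_starc.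
Qed.

End ErrorLocation.

Theorem proposition3p4 (F : finFieldType) (n t : nat)
  (A B C : {vspace 'rV[F]_n}) (c e : 'rV[F]_n) :
  two_power_ELP A B C t ->
  c \in C -> wt e = t ->
  let y := c + e in
  let M := M1set A B y :&: M2set A B C y in
  [/\ shortc A (supp e) \subset M,
      M \subset M1set A B y &
      M1set A B y \subset [set a : 'rV[F]_n | a \in A]].
Proof.
move=> [sABC _ _ _ _] cC _ y M; rewrite {}/M {}/y; split.
- by rewrite subsetI (shortc_sub_M1set e sABC cC) (shortc_sub_M2set e sABC cC).
- exact: subsetIl.
- by apply/subsetP => a; rewrite !inE => /andP[].
Qed.
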